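(* Let $k\ge1$ be an integer and $g:\mathbb{N}\to\mathbb{R}$ be such that $F_0(g;J,L)$ is finite for all integers $J$ with $k>J$ and all $L\ge0$. Then for every $J<k$, every $L\ge0$ and every $m=1,\dots,J-1$, $F_m(g;J,L)$ is finite and $$F_m(g;J,L)=F_{m-1}(g;J,L)-F_{m-1}(g;J-1,L)-\frac1k F_{m-1}(g;J-1,L+1).$$ In addition, this recursion also holds for $m=J$ if $g(i)=1$ for all $i\in\mathbb{N}$.
   Context: $\mathbb{N}=\{0,1,2,\dots\}$. For integers $J\ge1$, $0\le m\le J$, $L\ge0$ and $g:\mathbb{N}\to\mathbb{R}$, with $\mathbf{n}=(n_1,\dots,n_J)$ and $|\mathbf{n}|=n_1+\dots+n_J$, $$F_m(g;J,L)=\sum_{\substack{n_1\ge2,\dots,n_m\ge2\\ n_{m+1}\ge0,\dots,n_J\ge0}}\frac{(L+|\mathbf{n}|)!}{n_1!\cdots n_J!}\Big(\frac1k\Big)^{|\mathbf{n}|}g(n_J).$$ *)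

From HB Require Import structures.
From mathcomp Require Import all_boot all_order all_algebra.
From mathcomp Require Import all_classical all_reals all_analysis.
Set Implicit Arguments. Unset Strict Implicit. Unset Printing Implicit Defensive.
Import Order.TTheory GRing.Theory Num.Theory.
Local Open Scope classical_set_scope.
Local Open Scope ring_scope.

(* Multi-indices n = (n_1,...,n_J) are finite functions 'I_J -> nat;
   component n_{i+1} is n i (0-based ordinals). *)

Definition mabs (J : nat) (n : {ffun 'I_J -> nat}) : nat := (\sum_(i < J) n i)%N.

(* n_J, the last component (convention: 0 when J = 0, only relevant for
   F_{m-1}(g;0,L) in the m = J = 1 case with g = 1) *)
Definition mlast (J : nat) (n : {ffun 'I_J -> nat}) : nat :=
  last 0%N [seq n i | i <- enum 'I_J].

Definition Fdom (J m : nat) : set {ffun 'I_J -> nat} :=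
  [set n | forall i : 'I_J, (i < m)%N -> (2 <= n i)%N].

Definition Fterm (R : realType) (k : nat) (g : nat -> R) (J L : nat)
  (n : {ffun 'I_J -> nat}) : \bar R :=
  ((((L + mabs n)`!)%:R / (\prod_(i < J) (n i)`!)%:R
     * (k%:R^-1) ^+ mabs n * g (mlast n))%:E)%E.

Arguments Fterm {R} k g J L n.
Arguments Fdom : clear implicits.

(* "F_m(g;J,L) is finite": the series converges absolutely *)
Definition Ffinite (R : realType) (k : nat) (g : nat -> R) (m J L : nat) : Prop :=
  summable (Fdom J m) (Fterm k g J L).

Definition F (R : realType) (k : nat) (g : nat -> R) (m J L : nat) : R :=
  fine (esum (Fdom J m) (Fterm k g J L)^\+ - esum (Fdom J m) (Fterm k g J L)^\-)%E.

(** Split the sum defining [F_{m-1}(g;J,L)] according to the value of the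
    coordinate [n_m].  The terms with [n_m >= 2] make up [F_m(g;J,L)].
    Deleting the coordinate [n_m] maps the terms with [n_m = 0] bijectively
    onto those of [F_{m-1}(g;J-1,L)], and the terms with [n_m = 1] onto [1/k]
    times those of [F_{m-1}(g;J-1,L+1)], since then [n_m! = 1] and
    [(L+|n|)! = (L+1+|n'|)!].  The factor [g(n_J)] is unaffected when [m < J]
    or when [g] is constant.  Applied to absolute values, the split shows that
    every piece is finite; applied to positive and negative parts separately,
    it gives the recursion. *)

From mathcomp Require Import all_boot all_order all_algebra.
From mathcomp Require Import all_classical all_reals all_analysis.
From mathcomp Require Import zify ring.
Set Implicit Arguments.
Unset Strict Implicit.
Unset Printing Implicit Defensive.

Import Order.TTheory GRing.Theory Num.Theory.
Local Open Scope classical_set_scope.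
Local Open Scope ring_scope.

Lemma mlastS (J : nat) (n : {ffun 'I_J.+1 -> nat}) : mlast n = n ord_max.
Proof. by rewrite /mlast enum_ordSr map_rcons last_rcons. Qed.

Section MultiIndexInsertion.
Variables (J : nat) (p : 'I_J.+1).

Definition mins (c : nat) (n : {ffun 'I_J -> nat}) : {ffun 'I_J.+1 -> nat} :=
  [ffun i => if unlift p i is Some j then n j else c].

Definition mdel (n : {ffun 'I_J.+1 -> nat}) : {ffun 'I_J -> nat} :=
  [ffun j => n (lift p j)].

Lemma mins_lift c n j : mins c n (lift p j) = n j.
Proof. by rewrite ffunE liftK. Qed.

Lemma mins_at c n : mins c n p = c.
Proof. by rewrite ffunE unlift_none. Qed.

Lemma mins_inj c : injective (mins c).
Proof.
by move=> n1 n2 e; apply/ffunP => j; rewrite -(mins_lift c n1) e mins_lift.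
Qed.

Lemma mdelK (n : {ffun 'I_J.+1 -> nat}) : mins (n p) (mdel n) = n.
Proof.
by apply/ffunP => i; rewrite ffunE; case: unliftP => [j ->|->]; rewrite ?ffunE.
Qed.

Lemma mabs_mins c n : mabs (mins c n) = (c + mabs n)%N.
Proof.
rewrite /mabs (bigD1_ord p) //= mins_at.
by congr (_ + _)%N; apply: eq_bigr => i _; rewrite mins_lift.
Qed.

Lemma prod_fact_mins c n :
  (\prod_(i < J.+1) (mins c n i)`! = c`! * \prod_(i < J) (n i)`!)%N.
Proof.
rewrite (bigD1_ord p) //= mins_at.
by congr (_ * _)%N; apply: eq_bigr => i _; rewrite mins_lift.
Qed.

Lemma Fdom_mins c n : Fdom J.+1 p (mins c n) <-> Fdom J p n.
Proof.
split => dom_n i ip.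
  by rewrite -(mins_lift c); apply: dom_n; rewrite /= /bump; case: leqP; lia.
case: (unliftP p i) ip => [j -> | -> ]; last by rewrite ltnn.
by rewrite mins_lift /= /bump; case: leqP => pj jp; apply: dom_n; lia.
Qed.

Lemma Fdom_fiber c : Fdom J.+1 p `&` [set n | n p = c] = mins c @` Fdom J p.
Proof.
apply/seteqP; split => [n [dom_n <-] | _ [n dom_n <-]]; last first.
  by split; [exact/Fdom_mins | exact: mins_at].
by exists (mdel n); [apply/(Fdom_mins (n p)); rewrite mdelK | exact: mdelK].
Qed.

Lemma FdomS : Fdom J.+1 p.+1 = Fdom J.+1 p `&` [set n | (1 < n p)%N].
Proof.
apply/seteqP; split => n.
  by move=> dom_n; split; [move=> i ip; apply: dom_n; lia | exact: dom_n].
move=> [dom_n np] i; rewrite ltnS leq_eqVlt => /orP[/eqP/val_inj -> // | ].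
exact: dom_n.
Qed.

Lemma Fdom_small_fiber c : (c < 2)%N ->
  Fdom J.+1 p `&` ~` [set n : {ffun 'I_J.+1 -> nat} | (1 < n p)%N]
    `&` [set n : {ffun 'I_J.+1 -> nat} | n p = c] = mins c @` Fdom J p.
Proof.
move=> c_lt2; rewrite -Fdom_fiber; apply/seteqP.
split => n /=; first by case=> [[]].
by case=> dom_n np; do !split => //; rewrite np; lia.
Qed.

End MultiIndexInsertion.

Lemma mlast_mins (J : nat) (p : 'I_J.+1) c (n : {ffun 'I_J -> nat}) :
  (p < J)%N -> mlast (mins p c n) = mlast n.
Proof.
case: J p n => [|J'] p' n; first by rewrite ltn0.
move=> p'J; rewrite !mlastS.
have -> : ord_max = lift p' ord_max.
  by apply/val_inj; rewrite /= /bump -ltnS p'J.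
by rewrite mins_lift.
Qed.

Section ExtendedSums.
Variables (R : realType) (T : choiceType).
Local Open Scope ereal_scope.

Lemma ge0_esumZl (D : set T) (a : T -> \bar R) (c : R) :
  (0 < c)%R -> (forall x, 0 <= a x) ->
  \esum_(x in D) (c%:E * a x) = c%:E * \esum_(x in D) a x.
Proof.
move=> c_gt0 a_ge0; rewrite /esum -ereal_sup_pZl //; congr ereal_sup.
have sumZ X : finite_set X ->
    \sum_(x \in X) (c%:E * a x) = c%:E * \sum_(x \in X) a x.
  by move=> finX; rewrite !fsbig_finite // ge0_sume_distrr.
apply/seteqP; split => y.
  move=> [X [finX XD] <-].
  by exists (\sum_(x \in X) a x); [exists X | rewrite sumZ].
by move=> [_ [X [finX XD] <-] <-]; exists X => //; rewrite sumZ.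
Qed.

Lemma summableS (A B : set T) (f : T -> \bar R) :
  A `<=` B -> summable B f -> summable A f.
Proof.
move=> AB; apply: le_lt_trans; rewrite [leRHS](esumID A) //.
by rewrite setIidr // leeDl // esum_ge0.
Qed.

Lemma ge0_summable_fin_num (D : set T) (f : T -> \bar R) :
  (forall x, 0 <= f x) -> summable D f -> \esum_(x in D) f x \is a fin_num.
Proof.
move=> f_ge0; rewrite summableE.
by under eq_esum => x _ do rewrite gee0_abs //.
Qed.

Lemma fin_numZl (c : R) (x : \bar R) :
  c != 0%R -> (c%:E * x \is a fin_num) = (x \is a fin_num).
Proof.
move=> c_neq0; apply/idP/idP => [fin_cx | fin_x]; last exact: fin_numM.
by rewrite -[x]mul1e -(mulVf c_neq0) EFinM -muleA; exact: fin_numM.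
Qed.

Lemma fine_sub_split (a0 a1 a2 a3 b0 b1 b2 b3 : \bar R) (c : R) :
  a0 = a1 + a2 + c%:E * a3 -> b0 = b1 + b2 + c%:E * b3 ->
  a1 \is a fin_num -> a2 \is a fin_num -> a3 \is a fin_num ->
  b1 \is a fin_num -> b2 \is a fin_num -> b3 \is a fin_num ->
  fine (a1 - b1) = (fine (a0 - b0) - fine (a2 - b2) - c * fine (a3 - b3))%R.
Proof.
move=> -> ->; do 6 move=> /fineK <-.
by rewrite -!EFinM -!EFinD /=; ring.
Qed.

End ExtendedSums.

Section Recursion.
Variables (R : realType) (k : nat) (g : nat -> R).
Hypothesis k_gt0 : (0 < k)%N.

Lemma F_maxE m J L : F k g m J L =
  fine (\esum_(n in Fdom J m) maxe (Fterm k g J L n) 0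
        - \esum_(n in Fdom J m) maxe (- Fterm k g J L n) 0)%E.
Proof.
by rewrite /F; congr (fine (_ - _)); apply: eq_esum => n _;
  rewrite (funeposE, funenegE).
Qed.

Lemma Ffinite_esum_pos m J L : Ffinite k g m J L ->
  (\esum_(n in Fdom J m) maxe (Fterm k g J L n) 0)%E \is a fin_num.
Proof.
move=> /summable_funepos /ge0_summable_fin_num.
by rewrite (eq_esum (fun n _ => funeposE _ n)); apply=> n; exact: funepos_ge0.
Qed.

Lemma Ffinite_esum_neg m J L : Ffinite k g m J L ->
  (\esum_(n in Fdom J m) maxe (- Fterm k g J L n) 0)%E \is a fin_num.
Proof.
move=> /summable_funeneg /ge0_summable_fin_num.
by rewrite (eq_esum (fun n _ => funenegE _ n)); apply=> n; exact: funeneg_ge0.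
Qed.

Variables (J : nat) (p : 'I_J.+1).
Hypothesis g_mins : forall c n, g (mlast (mins p c n)) = g (mlast n).

Let invk_gt0 : 0 < (k%:R : R)^-1.
Proof. by rewrite invr_gt0 ltr0n. Qed.

Lemma Fterm_mins0 L n : Fterm k g J.+1 L (mins p 0 n) = Fterm k g J L n.
Proof. by rewrite /Fterm mabs_mins prod_fact_mins g_mins add0n mul1n. Qed.

Lemma Fterm_mins1 L n :
  Fterm k g J.+1 L (mins p 1 n) = ((k%:R^-1)%:E * Fterm k g J L.+1 n)%E.
Proof.
rewrite /Fterm mabs_mins prod_fact_mins g_mins mul1n add1n addnS -addSn.
by rewrite -EFinM exprS; congr EFin; ring.
Qed.

Lemma esum_Fdom_split (h : \bar R -> \bar R) L :
  (forall x, 0 <= h x)%E ->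
  (forall (c : R) x, 0 < c -> h (c%:E * x)%E = (c%:E * h x)%E) ->
  (\esum_(n in Fdom J.+1 p) h (Fterm k g J.+1 L n) =
   \esum_(n in Fdom J.+1 p.+1) h (Fterm k g J.+1 L n)
   + \esum_(n in Fdom J p) h (Fterm k g J L n)
   + (k%:R^-1)%:E * \esum_(n in Fdom J p) h (Fterm k g J L.+1 n))%E.
Proof.
move=> h_ge0 hZ.
rewrite (esumID [set n : {ffun 'I_J.+1 -> nat} | (1 < n p)%N]) //.
rewrite -FdomS -addeA; congr (_ + _)%E.
rewrite (esumID [set n : {ffun 'I_J.+1 -> nat} | n p = 0%N]) //.
rewrite Fdom_small_fiber //.
have -> : Fdom J.+1 p `&` ~` [set n : {ffun 'I_J.+1 -> nat} | (1 < n p)%N]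
    `&` ~` [set n : {ffun 'I_J.+1 -> nat} | n p = 0%N] = mins p 1 @` Fdom J p.
  rewrite -Fdom_small_fiber //; apply/seteqP.
  by split=> n /= [[dom_n not2] np]; do !split => //; lia.
rewrite !esum_image; try by move=> ? ? _ _; apply: mins_inj.
rewrite -ge0_esumZl //; congr (_ + _)%E; apply: eq_esum => n _.
  by rewrite Fterm_mins0.
by rewrite Fterm_mins1 hZ.
Qed.

Lemma F_recursion L : Ffinite k g 0 J.+1 L ->
  Ffinite k g p.+1 J.+1 L /\
  F k g p.+1 J.+1 L = F k g p J.+1 L - F k g p J L - k%:R^-1 * F k g p J L.+1.
Proof.
move=> fin0.
have abs_pZ (c : R) (x : \bar R) : 0 < c -> `|c%:E * x|%E = (c%:E * `|x|)%E.
  by move=> c_gt0; rewrite abseM gee0_abs // lee_fin ltW.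
have pos_pZ (c : R) (x : \bar R) : 0 < c ->
    (maxe (c%:E * x) 0 = c%:E * maxe x 0)%E.
  by move=> c_gt0; rewrite maxe_pMr ?mule0 // lee_fin ltW.
have neg_pZ (c : R) (x : \bar R) : 0 < c ->
    (maxe (- (c%:E * x)) 0 = c%:E * maxe (- x) 0)%E.
  by move=> c_gt0; rewrite -muleN pos_pZ.
have [fin1 fin2 fin3] :
    [/\ Ffinite k g p.+1 J.+1 L, Ffinite k g p J L & Ffinite k g p J L.+1].
  have : Ffinite k g p J.+1 L by apply: summableS fin0 => n _ i; rewrite ltn0.
  rewrite /Ffinite !summableE (esum_Fdom_split L (@abse_ge0 R) abs_pZ).
  rewrite !fin_numD fin_numZl ?invr_eq0 ?pnatr_eq0 -?lt0n //.
  by rewrite -andbA => /and3P.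
split=> //; rewrite !F_maxE.
have max0_ge0 (x : \bar R) : (0 <= maxe x 0)%E by rewrite le_max lexx orbT.
apply: (fine_sub_split (esum_Fdom_split L max0_ge0 pos_pZ)
  (esum_Fdom_split L (fun x => max0_ge0 (- x)%E) neg_pZ)).
1-3: exact: Ffinite_esum_pos.
all: exact: Ffinite_esum_neg.
Qed.

End Recursion.

Theorem lemmaA1 (R : realType) (k : nat) (g : nat -> R) :
  (1 <= k)%N ->
  (forall J L : nat, (1 <= J)%N -> (J < k)%N -> Ffinite k g 0 J L) ->
  (forall J L m : nat, (J < k)%N -> (1 <= m)%N -> (m <= J - 1)%N ->
     Ffinite k g m J L /\
     F k g m J L = F k g m.-1 J L - F k g m.-1 J.-1 L
                   - k%:R^-1 * F k g m.-1 J.-1 L.+1) /\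
  ((forall i : nat, g i = 1) ->
   forall J L : nat, (1 <= J)%N -> (J < k)%N ->
     Ffinite k g J J L /\
     F k g J J L = F k g J.-1 J L - F k g J.-1 J.-1 L
                   - k%:R^-1 * F k g J.-1 J.-1 L.+1).
Proof.
move=> k_gt0 fin0; split.
  move=> [|J] L [|m] Jk m_gt0 mJ //.
  have m_lt : (m < J.+1)%N by lia.
  have g_mins c n : g (mlast (mins (Ordinal m_lt) c n)) = g (mlast n).
    by rewrite mlast_mins //=; lia.
  exact: (F_recursion k_gt0 g_mins (fin0 J.+1 L isT Jk)).
move=> g1 [|J] L J_gt0 Jk //.
have g_mins c n : g (mlast (mins (@ord_max J) c n)) = g (mlast n).
  by rewrite !g1.
exact: (F_recursion k_gt0 g_mins (fin0 J.+1 L isT Jk)).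
Qed.
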